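(* Let $D$ be a CAEXT derivation ending in a configuration $C\neq\mathsf{unsat}$. Then in $C$, for all array terms $a$ and constant array terms $\langle v\rangle$: if $\pi(a,\langle v\rangle)\neq()$, then the formula $$\mathcal R(a,\langle v\rangle)\Rightarrow \forall i{:}\sigma.\ \Big(\bigvee_{k\in I(a,\langle v\rangle)} i\approx k\Big)\vee a[i]\approx v$$ is valid in the theory of extensional constant arrays.
   Context: Theory. Many-sorted first-order logic with equality. There is an index sort $\sigma$, an element sort $\tau$, and an array sort $(\sigma\to\tau)$, with function symbols: read $a[i]$, write $a\langle i\triangleleft u\rangle$, and constant array $\langle v\rangle$. The theory of extensional constant arrays consists of all interpretations satisfying: (row-eq) $\forall a,i,j,u.\ i\approx j\Rightarrow a\langle i\triangleleft u\rangle[j]\approx u$; (row-ne) $\forall a,i,j,u.\ i\not\approx j\Rightarrow a\langle i\triangleleft u\rangle[j]\approx a[j]$; (ext) $\forall a,b.\ a\approx b\Leftrightarrow \forall i.\ a[i]\approx b[i]$; (roc) $\forall i,v.\ \langle v\rangle[i]\approx v$. The empty theory treats all these symbols (and the array sort) as uninterpreted. $T(A)$ is the set of terms occurring in $A$, $T_{\mathcal A}(A)$ the set of array terms in $A$, and $W(A)=\{a\langle i\triangleleft u\rangle[i]\approx u \mid a\langle i\triangleleft u\rangle\in T(A)\}$. Configurations. A configuration is either $\mathsf{unsat}$ or a triple $\langle A,\mathcal I,\pi\rangle$ where $A$ is a set of formulas (with flat literals), $\mathcal I$ is either $\mathcal I_0=\mathsf{none}$ or an interpretation in the empty theory satisfying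 $A$, and $\pi$ maps pairs $(a,t)$ ($a$ an array term, $t$ a read term $b[i]$ or a constant array term $\langle v\rangle$) to either the undefined value $()$ or a pair $(r,c)$ with $r$ a formula and $c$ an array term. $\pi_0$ maps every pair to $()$; the initial configuration for $A$ is $\langle A,\mathcal I_0,\pi_0\rangle$. Reasons. $\mathcal R(a,t)=()$ if $\pi(a,t)=()$; otherwise $\mathcal R(a,t)=\top$ if $t=a$ or $t=a[i]$ for some $i$; otherwise $\mathcal R(a,t)=\mathcal R(c,t)\wedge r$ where $\pi(a,t)=(r,c)$. Updated indices $I(a,\langle v\rangle)$: $()$ if $\pi(a,\langle v\rangle)=()$; $\emptyset$ if $a=\langle v\rangle$; $I(b,\langle v\rangle)\cup\{j\}$ if $\pi(a,\langle v\rangle)=(\top,b)$ with $b=a\langle j\triangleleft u\rangle$ or $a=b\langle j\triangleleft u\rangle$; otherwise $I(c,\langle v\rangle)$ where $\pi(a,\langle v\rangle)=(r,c)$. ''$\mathcal I\models\varphi$'' refers to the current $\mathcal I$ (empty theory); such premises require $\mathcal I\ne\mathcal I_0$. ''Reset'' means $(\mathcal I,\pi):=(\mathcal I_0,\pi_0)$. Rules of CAEXT: Interp: if $\mathcal I=\mathcal I_0$ and $\mathcal I'\models A\cup W(A)$ in the empty theory, set $\mathcal I:=\mathcal I'$. Conf: if $A\cup W(A)$ is empty-theory unsatisfiable, derive $\mathsf{unsat}$. InitR: $a[i]\in T(A)$ ⟹ $\pi(a,a[i]):=(\top,a)$. InitW: $s=a\langle i\triangleleft u\rangle\in T(A)$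 ⟹ $\pi(s,s[i]):=(\top,s)$. RowD: $\mathcal I\models i\not\approx j$, $\pi(a\langle j\triangleleft u\rangle,b[i])\ne()$, $\pi(a,b[i])=()$ ⟹ $\pi(a,b[i]):=(i\not\approx j,a\langle j\triangleleft u\rangle)$. RowU: $\mathcal I\models i\not\approx j$, $a\langle j\triangleleft u\rangle\in T(A)$, $\pi(a,b[i])\ne()$, $\pi(a\langle j\triangleleft u\rangle,b[i])=()$ ⟹ $\pi(a\langle j\triangleleft u\rangle,b[i]):=(i\not\approx j,a)$. EqR: $\mathcal I\models a\approx c$, $a,c\in T_{\mathcal A}(A)$, $a\approx c\in T(A)$, $\pi(a,b[i])\ne()$, $\pi(c,b[i])=()$ ⟹ $\pi(c,b[i]):=(a\approx c,a)$. EqL: symmetric, $\pi(a,b[i]):=(a\approx c,c)$. CongR: $\mathcal I\models i\approx k$, $\pi(a,b[i])\ne()$, $\pi(a,c[k])\ne()$, $\mathcal I\models b[i]\not\approx c[k]$ ⟹ add $\mathcal R(a,b[i])\wedge\mathcal R(a,c[k])\wedge i\approx k\Rightarrow b[i]\approx c[k]$ to $A$, reset. DisEq: $\mathcal I\models a\not\approx c$, $a,c\in T_{\mathcal A}(A)$, $a\approx c\in T(A)$, $k_{\{a,c\}}\notin T(A)$ ⟹ add $a\not\approx c\Rightarrow a[k_{\{a,c\}}]\not\approx c[k_{\{a,c\}}]$ (fresh index constant $k_{\{a,c\}}$), reset. Roc: $\pi(\langle v\rangle,b[i])\ne()$, $\mathcal I\models b[i]\not\approx v$ ⟹ add $\mathcal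 R(\langle v\rangle,b[i])\Rightarrow b[i]\approx v$, reset. InitC: $\langle v\rangle\in T(A)$ ⟹ $\pi(\langle v\rangle,\langle v\rangle):=(\top,\langle v\rangle)$. CowD: $\pi(a\langle j\triangleleft u\rangle,\langle v\rangle)\ne()$, $\pi(a,\langle v\rangle)=()$, $\mathcal I\models\exists i{:}\sigma.\bigwedge_{k\in I(a\langle j\triangleleft u\rangle,\langle v\rangle)\cup\{j\}}i\not\approx k$ ⟹ $\pi(a,\langle v\rangle):=(\top,a\langle j\triangleleft u\rangle)$. CowU: $\pi(a,\langle v\rangle)\ne()$, $\pi(a\langle j\triangleleft u\rangle,\langle v\rangle)=()$, $a\langle j\triangleleft u\rangle\in T(A)$, $\mathcal I\models\exists i{:}\sigma.\bigwedge_{k\in I(a,\langle v\rangle)\cup\{j\}}i\not\approx k$ ⟹ $\pi(a\langle j\triangleleft u\rangle,\langle v\rangle):=(\top,a)$. CEqR: $\mathcal I\models a\approx c$, $a,c\in T_{\mathcal A}(A)$, $a\approx c\in T(A)$, $\pi(a,\langle v\rangle)\ne()$, $\pi(c,\langle v\rangle)=()$ ⟹ $\pi(c,\langle v\rangle):=(a\approx c,a)$. CEqL: symmetric, $\pi(a,\langle v\rangle):=(a\approx c,c)$. CongC: $\pi(a,\langle v\rangle)\ne()$, $\pi(a,\langle w\rangle)\ne()$, $\mathcal I\models v\not\approx w$, $\mathcal I\models\exists i{:}\sigma.\bigwedge_{k\in I(a,\langle v\rangle)\cup I(a,\langle w\rangle)}i\not\approx k$ ⟹ add $\mathcal R(a,\langle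 v\rangle)\wedge\mathcal R(a,\langle w\rangle)\wedge\exists i{:}\sigma.\bigwedge_{k\in I(a,\langle v\rangle)\cup I(a,\langle w\rangle)}i\not\approx k\Rightarrow v\approx w$, reset. Conflict rules: CongR, DisEq, Roc, CongC. A derivation is a sequence of configurations starting from an initial configuration, each obtained from the previous by a rule application. *)

From Stdlib Require Import List.
Import ListNotations.

(* Many-sorted terms: index sort sigma, element sort tau, array sort.  *)
(* IK a c is the fresh index constant k_{a,c} introduced by DisEq.     *)
Inductive idx : Type :=
| IC : nat -> idx
| IK : arr -> arr -> idx
with elem : Type :=
| EC : nat -> elem
| ERd : arr -> idx -> elem
with arr : Type :=
| AC : nat -> arr
| AWr : arr -> idx -> elem -> arr
| ACst : elem -> arr.

Inductive term : Type := TI : idx -> term | TE : elem -> term | TA : arr -> term.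

(* Quantifier-free formulas, plus the only quantified shape used by the
   calculus: FExNe K  ==  exists i:sigma. /\_{k in K} i <> k. *)
Inductive formula : Type :=
| FTrue | FFalse
| FEqI : idx -> idx -> formula
| FEqE : elem -> elem -> formula
| FEqA : arr -> arr -> formula
| FNot : formula -> formula
| FAnd : formula -> formula -> formula
| FOr : formula -> formula -> formula
| FImp : formula -> formula -> formula
| FExNe : list idx -> formula.

Record interp : Type := {
  Isort : Type; Esort : Type; Asort : Type;
  iC : nat -> Isort; iK : arr -> arr -> Isort;
  eC : nat -> Esort; aC : nat -> Asort;
  rd : Asort -> Isort -> Esort;
  wr : Asort -> Isort -> Esort -> Asort;
  cst : Esort -> Asort }.

Fixpoint evI (M : interp) (i : idx) : Isort M :=
  match i with IC n => iC M n | IK a c => iK M a c end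
with evE (M : interp) (e : elem) : Esort M :=
  match e with EC n => eC M n | ERd a i => rd M (evA M a) (evI M i) end
with evA (M : interp) (a : arr) : Asort M :=
  match a with
  | AC n => aC M n
  | AWr b i u => wr M (evA M b) (evI M i) (evE M u)
  | ACst v => cst M (evE M v)
  end.

Fixpoint sat (M : interp) (f : formula) : Prop :=
  match f with
  | FTrue => True
  | FFalse => False
  | FEqI i j => evI M i = evI M j
  | FEqE e e' => evE M e = evE M e'
  | FEqA a b => evA M a = evA M b
  | FNot g => ~ sat M g
  | FAnd g h => sat M g /\ sat M h
  | FOr g h => sat M g \/ sat M h
  | FImp g h => sat M g -> sat M h
  | FExNe K => exists x : Isort M, forall k, In k K -> x <> evI M k
  end.

Definition cae_model (M : interp) : Prop :=
  (forall a i j u, i = j -> rd M (wr M a i u) j = u) /\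
  (forall a i j u, i <> j -> rd M (wr M a i u) j = rd M a j) /\
  (forall a b, a = b <-> forall i, rd M a i = rd M b i) /\
  (forall i v, rd M (cst M v) i = v).

(* Occurrence of terms: T(A).  IK a c is a constant symbol, so a and c
   are not subterms of it. *)
Fixpoint occI (t : term) (i : idx) : Prop := t = TI i
with occE (t : term) (e : elem) : Prop :=
  t = TE e \/ match e with EC _ => False | ERd a i => occA t a \/ occI t i end
with occA (t : term) (a : arr) : Prop :=
  t = TA a \/ match a with
              | AC _ => False
              | AWr b i u => occA t b \/ occI t i \/ occE t u
              | ACst v => occE t v
              end.

Fixpoint occF (t : term) (f : formula) : Prop :=
  match f with
  | FTrue | FFalse => False
  | FEqI i j => occI t i \/ occI t j
  | FEqE e e' => occE t e \/ occE t e'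
  | FEqA a b => occA t a \/ occA t b
  | FNot g => occF t g
  | FAnd g h | FOr g h | FImp g h => occF t g \/ occF t h
  | FExNe K => exists k, In k K /\ occI t k
  end.

Definition inT (t : term) (A : list formula) : Prop :=
  exists f, In f A /\ occF t f.

Fixpoint atomA (a c : arr) (f : formula) : Prop :=
  match f with
  | FEqA a' c' => a' = a /\ c' = c
  | FNot g => atomA a c g
  | FAnd g h | FOr g h | FImp g h => atomA a c g \/ atomA a c h
  | _ => False
  end.

Definition atomInA (a c : arr) (A : list formula) : Prop :=
  exists f, In f A /\ atomA a c f.

(* M satisfies A ∪ W(A) (empty theory: any interpretation). *)
Definition satAW (M : interp) (A : list formula) : Prop :=
  (forall f, In f A -> sat M f) /\
  (forall a i u, inT (TA (AWr a i u)) A ->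
     sat M (FEqE (ERd (AWr a i u) i) u)).

(* The map pi.  Second components: read terms b[i] or constant arrays <v>. *)
Inductive tgt : Type := TgR : arr -> idx -> tgt | TgC : elem -> tgt.

Definition pimap : Type := arr -> tgt -> option (formula * arr).
Definition pi0 : pimap := fun _ _ => None.

Definition is_self (a : arr) (t : tgt) : Prop :=
  match t with TgR b _ => b = a | TgC v => a = ACst v end.

(* Reasons R(a,t) = r  (relational form of the recursive definition). *)
Inductive Reason (p : pimap) : arr -> tgt -> formula -> Prop :=
| R_base a t : p a t <> None -> is_self a t -> Reason p a t FTrue
| R_step a t r c r' : p a t = Some (r, c) -> ~ is_self a t ->
    Reason p c t r' -> Reason p a t (FAnd r' r).

Definition wr_nb (a b : arr) (j : idx) : Prop :=
  (exists u, b = AWr a j u) \/ (exists u, a = AWr b j u).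

(* Updated indices I(a,<v>) = K  (relational form; lists as finite sets). *)
Inductive Upd (p : pimap) : arr -> elem -> list idx -> Prop :=
| U_self v : p (ACst v) (TgC v) <> None -> Upd p (ACst v) v nil
| U_wr a v b j K : a <> ACst v -> p a (TgC v) = Some (FTrue, b) ->
    wr_nb a b j -> Upd p b v K -> Upd p a v (j :: K)
| U_other a v r c K : a <> ACst v -> p a (TgC v) = Some (r, c) ->
    ~ (r = FTrue /\ exists j, wr_nb a c j) -> Upd p c v K -> Upd p a v K.

(* Configurations; None : option cfg is unsat. *)
Record cfg : Type := mkCfg { cA : list formula; cI : option interp; cpi : pimap }.

Definition initial (A : list formula) : option cfg := Some (mkCfg A None pi0).

Definition upd_pi (p : pimap) (a : arr) (t : tgt) (x : formula * arr) (p' : pimap) : Prop :=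
  p' a t = Some x /\ forall a' t', (a', t') <> (a, t) -> p' a' t' = p a' t'.

Definition holds (C : cfg) (f : formula) : Prop :=
  exists M, cI C = Some M /\ sat M f.

Definition add_reset (C : cfg) (f : formula) : option cfg :=
  Some (mkCfg (f :: cA C) None pi0).

Definition set_pi (C : cfg) (p' : pimap) : option cfg :=
  Some (mkCfg (cA C) (cI C) p').

Inductive step (C : cfg) : option cfg -> Prop :=
| S_Interp M : cI C = None -> satAW M (cA C) ->
    step C (Some (mkCfg (cA C) (Some M) (cpi C)))
| S_Conf : (forall M, ~ satAW M (cA C)) -> step C None
| S_InitR a i p' : inT (TE (ERd a i)) (cA C) ->
    upd_pi (cpi C) a (TgR a i) (FTrue, a) p' -> step C (set_pi C p')
| S_InitW a i u p' : inT (TA (AWr a i u)) (cA C) ->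
    upd_pi (cpi C) (AWr a i u) (TgR (AWr a i u) i) (FTrue, AWr a i u) p' ->
    step C (set_pi C p')
| S_RowD a b i j u p' : holds C (FNot (FEqI i j)) ->
    cpi C (AWr a j u) (TgR b i) <> None -> cpi C a (TgR b i) = None ->
    upd_pi (cpi C) a (TgR b i) (FNot (FEqI i j), AWr a j u) p' ->
    step C (set_pi C p')
| S_RowU a b i j u p' : holds C (FNot (FEqI i j)) ->
    inT (TA (AWr a j u)) (cA C) ->
    cpi C a (TgR b i) <> None -> cpi C (AWr a j u) (TgR b i) = None ->
    upd_pi (cpi C) (AWr a j u) (TgR b i) (FNot (FEqI i j), a) p' ->
    step C (set_pi C p')
| S_EqR a c b i p' : holds C (FEqA a c) ->
    inT (TA a) (cA C) -> inT (TA c) (cA C) -> atomInA a c (cA C) ->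
    cpi C a (TgR b i) <> None -> cpi C c (TgR b i) = None ->
    upd_pi (cpi C) c (TgR b i) (FEqA a c, a) p' -> step C (set_pi C p')
| S_EqL a c b i p' : holds C (FEqA a c) ->
    inT (TA a) (cA C) -> inT (TA c) (cA C) -> atomInA a c (cA C) ->
    cpi C c (TgR b i) <> None -> cpi C a (TgR b i) = None ->
    upd_pi (cpi C) a (TgR b i) (FEqA a c, c) p' -> step C (set_pi C p')
| S_CongR a b c i k r1 r2 : holds C (FEqI i k) ->
    cpi C a (TgR b i) <> None -> cpi C a (TgR c k) <> None ->
    holds C (FNot (FEqE (ERd b i) (ERd c k))) ->
    Reason (cpi C) a (TgR b i) r1 -> Reason (cpi C) a (TgR c k) r2 ->
    step C (add_reset C (FImp (FAnd (FAnd r1 r2) (FEqI i k))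
                              (FEqE (ERd b i) (ERd c k))))
| S_DisEq a c : holds C (FNot (FEqA a c)) ->
    inT (TA a) (cA C) -> inT (TA c) (cA C) -> atomInA a c (cA C) ->
    ~ inT (TI (IK a c)) (cA C) -> ~ inT (TI (IK c a)) (cA C) ->
    step C (add_reset C (FImp (FNot (FEqA a c))
                 (FNot (FEqE (ERd a (IK a c)) (ERd c (IK a c))))))
| S_Roc v b i r : cpi C (ACst v) (TgR b i) <> None ->
    holds C (FNot (FEqE (ERd b i) v)) ->
    Reason (cpi C) (ACst v) (TgR b i) r ->
    step C (add_reset C (FImp r (FEqE (ERd b i) v)))
| S_InitC v p' : inT (TA (ACst v)) (cA C) ->
    upd_pi (cpi C) (ACst v) (TgC v) (FTrue, ACst v) p' -> step C (set_pi C p')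
| S_CowD a j u v K p' : cpi C (AWr a j u) (TgC v) <> None ->
    cpi C a (TgC v) = None -> Upd (cpi C) (AWr a j u) v K ->
    holds C (FExNe (K ++ [j])) ->
    upd_pi (cpi C) a (TgC v) (FTrue, AWr a j u) p' -> step C (set_pi C p')
| S_CowU a j u v K p' : cpi C a (TgC v) <> None ->
    cpi C (AWr a j u) (TgC v) = None -> inT (TA (AWr a j u)) (cA C) ->
    Upd (cpi C) a v K -> holds C (FExNe (K ++ [j])) ->
    upd_pi (cpi C) (AWr a j u) (TgC v) (FTrue, a) p' -> step C (set_pi C p')
| S_CEqR a c v p' : holds C (FEqA a c) ->
    inT (TA a) (cA C) -> inT (TA c) (cA C) -> atomInA a c (cA C) ->
    cpi C a (TgC v) <> None -> cpi C c (TgC v) = None ->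
    upd_pi (cpi C) c (TgC v) (FEqA a c, a) p' -> step C (set_pi C p')
| S_CEqL a c v p' : holds C (FEqA a c) ->
    inT (TA a) (cA C) -> inT (TA c) (cA C) -> atomInA a c (cA C) ->
    cpi C c (TgC v) <> None -> cpi C a (TgC v) = None ->
    upd_pi (cpi C) a (TgC v) (FEqA a c, c) p' -> step C (set_pi C p')
| S_CongC a v w K1 K2 r1 r2 : cpi C a (TgC v) <> None ->
    cpi C a (TgC w) <> None -> holds C (FNot (FEqE v w)) ->
    Upd (cpi C) a v K1 -> Upd (cpi C) a w K2 ->
    holds C (FExNe (K1 ++ K2)) ->
    Reason (cpi C) a (TgC v) r1 -> Reason (cpi C) a (TgC w) r2 ->
    step C (add_reset C (FImp (FAnd (FAnd r1 r2) (FExNe (K1 ++ K2)))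
                              (FEqE v w))).

Inductive derives : option cfg -> option cfg -> Prop :=
| D_refl x : derives x x
| D_step C y z : step C y -> derives y z -> derives (Some C) z.

Definition cae_valid_inv (r : formula) (K : list idx) (a : arr) (v : elem) : Prop :=
  forall M : interp, cae_model M -> sat M r ->
    forall x : Isort M, (exists k, In k K /\ x = evI M k) \/ rd M (evA M a) x = evE M v.

(* Every rule that defines an entry pi(a, <v>) with a <> <v> links a to an
   array c already carrying an entry for <v>, and the link preserves the claim
   "under the reason, a and <v> agree outside the updated indices": a write link
   (CowD, CowU) makes a and c agree off the write index, which is added to
   I(a, <v>), while an equality link (CEqR, CEqL) makes a and c equal under the
   equality, which is added to R(a, <v>). At the root, <v>[i] = v by (roc).
   Defined entries only ever point to defined entries, so the reasons and
   updated indices of old entries are not disturbed by new ones; the read rules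
   leave this part of pi untouched and the conflict rules reset it. *)
From Stdlib Require Import List Classical.

Lemma rd_wr_nb (M : interp) (a c : arr) j x :
  cae_model M -> wr_nb a c j -> x <> evI M j ->
  rd M (evA M a) x = rd M (evA M c) x.
Proof.
  intros [_ [row_ne _]] [[u ->] | [u ->]] Hx; simpl; rewrite row_ne; auto.
Qed.

Lemma cae_valid_inv_root (v : elem) : cae_valid_inv FTrue nil (ACst v) v.
Proof. intros M [_ [_ [_ roc]]] _ x. right. apply roc. Qed.

Lemma cae_valid_inv_wr_nb (a c : arr) j v r K :
  wr_nb a c j -> cae_valid_inv r K c v ->
  cae_valid_inv (FAnd r FTrue) (j :: K) a v.
Proof.
  intros Hw Hc M HM [Hr _] x.
  destruct (classic (x = evI M j)) as [-> | Hx].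
  - left. exists j. split; [left |]; reflexivity.
  - destruct (Hc M HM Hr x) as [[k [Hk ->]] | Hv].
    + left. exists k. split; [right |]; auto.
    + right. rewrite (rd_wr_nb M a c j x HM Hw Hx). exact Hv.
Qed.

Lemma cae_valid_inv_eq (a c : arr) v r K (f : formula) :
  (forall M, sat M f -> evA M a = evA M c) -> cae_valid_inv r K c v ->
  cae_valid_inv (FAnd r f) K a v.
Proof. intros Hf Hc M HM [Hr Hfs] x. rewrite (Hf M Hfs). exact (Hc M HM Hr x). Qed.

Definition chain_closed (p : pimap) (v : elem) : Prop :=
  forall x r c, x <> ACst v -> p x (TgC v) = Some (r, c) -> p c (TgC v) <> None.

(* [p'] keeps every entry of [p] for [<v>], except possibly the value stored at
   the root [<v>] itself, which neither reasons nor updated indices inspect. *)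
Definition column_agree (p p' : pimap) (v : elem) : Prop :=
  forall x, p x (TgC v) <> None ->
    p' x (TgC v) <> None /\ (x <> ACst v -> p' x (TgC v) = p x (TgC v)).

Definition cow_sound (p : pimap) (a : arr) (v : elem) : Prop :=
  (exists r, Reason p a (TgC v) r) /\
  (exists K, Upd p a v K) /\
  (forall r K, Reason p a (TgC v) r -> Upd p a v K -> cae_valid_inv r K a v).

Definition cow_invariant (p : pimap) : Prop :=
  forall v, chain_closed p v /\ forall a, p a (TgC v) <> None -> cow_sound p a v.

Lemma Reason_agree p p' v a r :
  column_agree p p' v -> Reason p a (TgC v) r -> Reason p' a (TgC v) r.
Proof.
  intros Hag HR. remember (TgC v) as t eqn:Et.
  induction HR as [a t Hd Hs | a t r c r' Ea Hs HR IH]; subst.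
  - apply R_base; [apply Hag |]; auto.
  - assert (Hd : p a (TgC v) <> None) by congruence.
    eapply R_step; [rewrite (proj2 (Hag a Hd) Hs); exact Ea | exact Hs | auto].
Qed.

Lemma Reason_agree_rev p p' v a r :
  chain_closed p v -> column_agree p p' v ->
  Reason p' a (TgC v) r -> p a (TgC v) <> None -> Reason p a (TgC v) r.
Proof.
  intros Hcl Hag HR. remember (TgC v) as t eqn:Et.
  induction HR as [a t _ Hs | a t r c r' Ea Hs HR IH]; subst; intros Hd.
  - apply R_base; auto.
  - rewrite (proj2 (Hag a Hd) Hs) in Ea.
    eapply R_step; [exact Ea | exact Hs | exact (IH eq_refl (Hcl _ _ _ Hs Ea))].
Qed.

Lemma Upd_agree p p' v a K : column_agree p p' v -> Upd p a v K -> Upd p' a v K.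
Proof.
  intros Hag HU. induction HU as [v Hd | a v b j K Hs Ea Hw HU IH
                                 | a v r c K Hs Ea Hw HU IH].
  - apply U_self. apply Hag; auto.
  - assert (Hd : p a (TgC v) <> None) by congruence.
    eapply U_wr; [exact Hs | rewrite (proj2 (Hag a Hd) Hs); exact Ea | exact Hw | auto].
  - assert (Hd : p a (TgC v) <> None) by congruence.
    eapply U_other; [exact Hs | rewrite (proj2 (Hag a Hd) Hs); exact Ea | exact Hw | auto].
Qed.

Lemma Upd_agree_rev p p' v a K :
  chain_closed p v -> column_agree p p' v ->
  Upd p' a v K -> p a (TgC v) <> None -> Upd p a v K.
Proof.
  intros Hcl Hag HU. induction HU as [v _ | a v b j K Hs Ea Hw HU IH
                                     | a v r c K Hs Ea Hw HU IH]; intros Hd.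
  - apply U_self; auto.
  - rewrite (proj2 (Hag a Hd) Hs) in Ea.
    eapply U_wr; [exact Hs | exact Ea | exact Hw | exact (IH Hcl Hag (Hcl _ _ _ Hs Ea))].
  - rewrite (proj2 (Hag a Hd) Hs) in Ea.
    eapply U_other; [exact Hs | exact Ea | exact Hw | exact (IH Hcl Hag (Hcl _ _ _ Hs Ea))].
Qed.

Lemma cow_sound_agree p p' a v :
  chain_closed p v -> column_agree p p' v -> p a (TgC v) <> None ->
  cow_sound p a v -> cow_sound p' a v.
Proof.
  intros Hcl Hag Hd [[r HR] [[K HU] Hvalid]]. split; [| split].
  - exists r. exact (Reason_agree _ _ _ _ _ Hag HR).
  - exists K. exact (Upd_agree _ _ _ _ _ Hag HU).
  - intros r' K' HR' HU'. apply Hvalid.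
    + exact (Reason_agree_rev _ _ _ _ _ Hcl Hag HR' Hd).
    + exact (Upd_agree_rev _ _ _ _ _ Hcl Hag HU' Hd).
Qed.

Lemma cow_sound_root p v : p (ACst v) (TgC v) <> None -> cow_sound p (ACst v) v.
Proof.
  intros Hd. split; [| split].
  - exists FTrue. apply R_base; [exact Hd | reflexivity].
  - exists nil. apply U_self. exact Hd.
  - intros r K HR HU.
    inversion HR as [? ? _ _ | ? ? ? ? ? _ Hs _]; subst; [| now contradict Hs].
    inversion HU; subst; try congruence.
    apply cae_valid_inv_root.
Qed.

Definition cow_link (r : formula) (a c : arr) : Prop :=
  (r = FTrue /\ exists j, wr_nb a c j) \/
  (r <> FTrue /\ forall M, sat M r -> evA M a = evA M c).

Lemma cow_sound_link p a c v r :
  a <> ACst v -> p a (TgC v) = Some (r, c) -> cow_link r a c ->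
  cow_sound p c v -> cow_sound p a v.
Proof.
  intros Hs Ea Hlink [[rc HRc] [[Kc HUc] Hvalid]]. split; [| split].
  - exists (FAnd rc r). eapply R_step; eauto.
  - destruct Hlink as [[-> [j Hw]] | [Hr _]].
    + exists (j :: Kc). eapply U_wr; eauto.
    + exists Kc. eapply U_other; eauto. intros [Hr' _]. exact (Hr Hr').
  - intros r' K HR HU.
    inversion HR as [? ? _ Hs' | ? ? r0 c0 rc' Ea' _ HRc']; subst; [now contradict Hs |].
    rewrite Ea in Ea'. injection Ea' as <- <-.
    inversion HU as [? Hself | ? ? b j K' _ Eb Hw HUb | ? ? r1 c1 K' _ Eb Hno HUb];
      subst; [now contradict Hs | |]; rewrite Ea in Eb; injection Eb as Er Ec; subst.
    + eapply cae_valid_inv_wr_nb; eauto.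
    + destruct Hlink as [[-> Hw] | [_ Heq]]; [now contradict Hno |].
      eapply cae_valid_inv_eq; eauto.
Qed.

Lemma column_agree_upd p p' a0 v0 x0 :
  upd_pi p a0 (TgC v0) x0 p' -> (a0 = ACst v0 \/ p a0 (TgC v0) = None) ->
  forall v, column_agree p p' v.
Proof.
  intros [E0 Eo] Hnew v x Hd.
  destruct (classic ((x, TgC v) = (a0, TgC v0))) as [Eq | Ne].
  - injection Eq as -> ->. split; [congruence |].
    intros Hs. destruct Hnew as [Hr | Hn]; contradiction.
  - rewrite (Eo _ _ Ne). auto.
Qed.

Lemma cow_invariant_upd p p' a0 v0 r0 c0 :
  cow_invariant p -> upd_pi p a0 (TgC v0) (r0, c0) p' ->
  (a0 = ACst v0 \/ p a0 (TgC v0) = None) ->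
  (a0 <> ACst v0 -> p c0 (TgC v0) <> None) ->
  ((forall v, column_agree p p' v) -> cow_sound p' a0 v0) ->
  cow_invariant p'.
Proof.
  intros Hinv Hupd Hnew Hc0 Hsound0.
  pose proof (column_agree_upd _ _ _ _ _ Hupd Hnew) as Hag.
  destruct Hupd as [E0 Eo]. intros v. split.
  - intros x r c Hs Ex.
    destruct (classic ((x, TgC v) = (a0, TgC v0))) as [Eq | Ne].
    + injection Eq as -> ->. rewrite E0 in Ex. injection Ex as <- <-.
      apply Hag. auto.
    + rewrite (Eo _ _ Ne) in Ex. apply Hag. exact (proj1 (Hinv v) _ _ _ Hs Ex).
  - intros a Hd.
    destruct (classic ((a, TgC v) = (a0, TgC v0))) as [Eq | Ne].
    + injection Eq as -> ->. exact (Hsound0 Hag).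
    + rewrite (Eo _ _ Ne) in Hd.
      apply cow_sound_agree with p; [apply Hinv | apply Hag | exact Hd |].
      exact (proj2 (Hinv v) a Hd).
Qed.

Lemma cow_invariant_set_root p p' v x0 :
  cow_invariant p -> upd_pi p (ACst v) (TgC v) x0 p' -> cow_invariant p'.
Proof.
  intros Hinv Hupd. destruct x0 as [r0 c0].
  apply (cow_invariant_upd _ _ _ _ _ _ Hinv Hupd); [left; reflexivity | congruence |].
  intros _. apply cow_sound_root. destruct Hupd as [E0 _]. congruence.
Qed.

Lemma cow_invariant_set_link p p' a v r c :
  cow_invariant p -> upd_pi p a (TgC v) (r, c) p' ->
  p a (TgC v) = None -> p c (TgC v) <> None -> cow_link r a c -> cow_invariant p'.
Proof.
  intros Hinv Hupd Hn Hc Hlink.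
  destruct (classic (a = ACst v)) as [-> | Hs].
  { exact (cow_invariant_set_root _ _ _ _ Hinv Hupd). }
  apply (cow_invariant_upd _ _ _ _ _ _ Hinv Hupd); [right; exact Hn | auto |].
  intros Hag. apply cow_sound_link with c r; [exact Hs | apply Hupd | exact Hlink |].
  apply cow_sound_agree with p; [apply Hinv | apply Hag | exact Hc |].
  exact (proj2 (Hinv v) c Hc).
Qed.

Lemma cow_invariant_ext p p' :
  (forall x v, p' x (TgC v) = p x (TgC v)) -> cow_invariant p -> cow_invariant p'.
Proof.
  intros E Hinv v.
  assert (Hag : column_agree p p' v) by (intros x Hd; rewrite E; auto).
  split.
  - intros x r c Hs Ex. rewrite E in Ex |- *. exact (proj1 (Hinv v) _ _ _ Hs Ex).
  - intros a Hd. rewrite E in Hd.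
    apply cow_sound_agree with p; [apply Hinv | exact Hag | exact Hd |].
    exact (proj2 (Hinv v) a Hd).
Qed.

Lemma cow_invariant_pi0 : cow_invariant pi0.
Proof.
  intros v. split; [intros x r c _ E; discriminate | intros a Hd; now contradict Hd].
Qed.

Lemma upd_pi_TgR_TgC p p' a b i x0 :
  upd_pi p a (TgR b i) x0 p' -> forall x v, p' x (TgC v) = p x (TgC v).
Proof. intros [_ Eo] x v. apply Eo. discriminate. Qed.

Definition cfg_invariant (y : option cfg) : Prop :=
  match y with None => True | Some C => cow_invariant (cpi C) end.

Lemma step_cfg_invariant C y : step C y -> cow_invariant (cpi C) -> cfg_invariant y.
Proof.
  intros Hs Hinv.
  destruct Hs as [ | | a i p' _ Hu | a i u p' _ Hu | a b i j u p' _ _ _ Hu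
                 | a b i j u p' _ _ _ _ Hu | a c b i p' _ _ _ _ _ _ Hu
                 | a c b i p' _ _ _ _ _ _ Hu | | | | v p' _ Hu
                 | a j u v K p' Hd Hn _ _ Hu | a j u v K p' Hd Hn _ _ _ Hu
                 | a c v p' _ _ _ _ Hd Hn Hu | a c v p' _ _ _ _ Hd Hn Hu | ];
    simpl; try exact I; try exact cow_invariant_pi0;
    try exact Hinv;
    try exact (cow_invariant_ext _ _ (upd_pi_TgR_TgC _ _ _ _ _ _ Hu) Hinv).
  - exact (cow_invariant_set_root _ _ _ _ Hinv Hu).
  - apply (cow_invariant_set_link _ _ _ _ _ _ Hinv Hu Hn Hd).
    left. split; [reflexivity |]. exists j. left. exists u. reflexivity.
  - apply (cow_invariant_set_link _ _ _ _ _ _ Hinv Hu Hn Hd).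
    left. split; [reflexivity |]. exists j. right. exists u. reflexivity.
  - apply (cow_invariant_set_link _ _ _ _ _ _ Hinv Hu Hn Hd).
    right. split; [discriminate | intros M HM; symmetry; exact HM].
  - apply (cow_invariant_set_link _ _ _ _ _ _ Hinv Hu Hn Hd).
    right. split; [discriminate | intros M HM; exact HM].
Qed.

Lemma derives_cfg_invariant x y : derives x y -> cfg_invariant x -> cfg_invariant y.
Proof.
  intros HD. induction HD as [x | C y z Hs HD IH]; auto.
  intros Hinv. exact (IH (step_cfg_invariant C y Hs Hinv)).
Qed.

Theorem mainTheorem6 (A0 : list formula) (C : cfg) :
  derives (initial A0) (Some C) ->
  forall (a : arr) (v : elem), cpi C a (TgC v) <> None ->
    (exists r, Reason (cpi C) a (TgC v) r) /\
    (exists K, Upd (cpi C) a v K) /\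
    (forall r K, Reason (cpi C) a (TgC v) r -> Upd (cpi C) a v K ->
       cae_valid_inv r K a v).
Proof.
  intros HD a v Hd.
  pose proof (derives_cfg_invariant _ _ HD cow_invariant_pi0) as Hinv.
  exact (proj2 (Hinv v) a Hd).
Qed.
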